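(* All connected graphs on at least three vertices are reconstructible if and only if all connected graphs $G$ on at least three vertices with $\gamma(G)=2$ or $\operatorname{diam}(G)=\operatorname{diam}(\overline{G})=2$ are reconstructible.
   Context: All graphs are finite, simple and undirected. $\gamma(G)$ denotes the domination number, $\operatorname{diam}(G)$ the diameter (infinite if $G$ is disconnected), and $\overline{G}$ the complement of $G$. For a vertex $v$, the card $G-v$ is the unlabeled graph obtained by deleting $v$; the deck $\mathscr{D}(G)$ is the multiset of all cards of $G$ up to isomorphism. $G$ is reconstructible if every graph $H$ with $\mathscr{D}(H)=\mathscr{D}(G)$ is isomorphic to $G$. *)

From mathcomp Require Import all_boot.
Set Implicit Arguments. Unset Strict Implicit. Unset Printing Implicit Defensive.

Record sgraph := SGraph {
  vert :> finType;
  adj : rel vert;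
  adj_sym : symmetric adj;
  adj_irr : irreflexive adj }.

Definition iso (G H : sgraph) : Prop :=
  exists f : G -> H, bijective f /\ forall x y, adj (f x) (f y) = adj x y.

Section Card.
Variables (G : sgraph) (v : G).
Definition card_vert : finType := {x : G | x != v}.
Definition card_adj : rel card_vert := fun x y => adj (val x) (val y).
Lemma card_adj_sym : symmetric card_adj.
Proof. by move=> x y; rewrite /card_adj adj_sym. Qed.
Lemma card_adj_irr : irreflexive card_adj.
Proof. by move=> x; rewrite /card_adj adj_irr. Qed.
Definition card_graph : sgraph := SGraph card_adj_sym card_adj_irr.
End Card.

(* Equal decks (as multisets of cards up to isomorphism): there is a
   bijection between the vertex sets matching each card of G with an
   isomorphic card of H. *)
Definition same_deck (G H : sgraph) : Prop :=
  exists s : G -> H, bijective s /\ forall v, iso (card_graph v) (card_graph (s v)).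

Definition reconstructible (G : sgraph) : Prop :=
  forall H : sgraph, same_deck G H -> iso G H.

Section Compl.
Variable G : sgraph.
Definition compl_adj : rel G := fun x y => (x != y) && ~~ adj x y.
Lemma compl_adj_sym : symmetric compl_adj.
Proof. by move=> x y; rewrite /compl_adj eq_sym adj_sym. Qed.
Lemma compl_adj_irr : irreflexive compl_adj.
Proof. by move=> x; rewrite /compl_adj eqxx. Qed.
Definition compl : sgraph := SGraph compl_adj_sym compl_adj_irr.
End Compl.

Definition connected (G : sgraph) : Prop := forall x y : G, connect (@adj G) x y.

Definition dominating (G : sgraph) (D : {set G}) : bool :=
  [forall v, (v \in D) || [exists u in D, adj u v]].

(* Domination number: minimum size of a dominating set (V itself dominates). *)
Definition gamma (G : sgraph) : nat :=
  \big[minn/#|G|]_(D : {set G} | dominating D) #|D|.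

Definition within (G : sgraph) (k : nat) (x y : G) : Prop :=
  exists p : seq G, [/\ path (@adj G) x p, last x p = y & size p <= k].

(* diam(G) = d : d is the least k such that every pair is within distance k
   (if G is disconnected no such k exists: diameter infinite). *)
Definition diam_is (G : sgraph) (d : nat) : Prop :=
  (forall x y : G, within d x y) /\
  (forall k, k < d -> ~ (forall x y : G, within k x y)).

(* If G has a dominating vertex, its complement has an
   isolated vertex; such a graph is reconstructible since the degree of the
   deleted vertex can be read off the deck (Kelly), and a graph is
   reconstructible whenever its complement is.  If a pair of vertices
   dominates G, then gamma(G) = 2.  If two vertices are at distance at least
   3, they form an adjacent dominating pair of the complement, which is thus
   connected with domination number 2 (it has no dominating vertex because G
   has no isolated one).  Otherwise diam(G) = 2, and also diam(compl G) = 2: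
   two vertices at distance at least 3 in the complement would dominate G. *)

From Stdlib Require Import Classical.
From mathcomp Require Import all_boot zify.
Set Implicit Arguments.
Unset Strict Implicit.
Unset Printing Implicit Defensive.

Lemma iso_sym (G H : sgraph) : iso G H -> iso H G.
Proof.
case=> f [[g fK gK] f_adj]; exists g; split; first by exists f.
by move=> x y; rewrite -f_adj !gK.
Qed.

Lemma iso_trans (G H K : sgraph) : iso G H -> iso H K -> iso G K.
Proof.
case=> f [f_bij f_adj] [g [g_bij g_adj]]; exists (g \o f).
by split=> [|x y /=]; [exact: bij_comp | rewrite g_adj f_adj].
Qed.

Lemma iso_compl (G H : sgraph) : iso G H -> iso (compl G) (compl H).
Proof.
case=> f [f_bij f_adj]; exists f; split=> // x y /=.
by rewrite /compl_adj f_adj (bij_eq f_bij).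
Qed.

Lemma adj_compl_compl (G : sgraph) (x y : G) :
  @adj (compl (compl G)) x y = adj x y.
Proof.
rewrite /= /compl_adj /= /compl_adj.
by case: eqVneq => [->|_] /=; rewrite ?adj_irr ?negbK.
Qed.

Lemma iso_compl_compl (G : sgraph) : iso G (compl (compl G)).
Proof. by exists id; split=> [|x y]; [exists id | rewrite adj_compl_compl]. Qed.

Lemma iso_card_compl (G : sgraph) (v : G) :
  iso (card_graph (v : compl G)) (compl (card_graph v)).
Proof. by exists id; split; first exists id. Qed.

Lemma same_deck_compl (G H : sgraph) :
  same_deck G H -> same_deck (compl G) (compl H).
Proof.
case=> s [s_bij s_cards]; exists s; split=> // v.
apply: iso_trans (iso_card_compl _) _.
exact: iso_trans (iso_compl (s_cards v)) (iso_sym (iso_card_compl _)).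
Qed.

Lemma reconstructible_compl (G : sgraph) :
  reconstructible (compl G) -> reconstructible G.
Proof.
move=> recGc H /same_deck_compl /recGc /iso_compl GccHcc.
apply: iso_trans (iso_compl_compl G) _.
exact: iso_trans GccHcc (iso_sym (iso_compl_compl H)).
Qed.

Definition deg (G : sgraph) (x : G) : nat := \sum_(y : G) adj x y.
Definition deg_sum (G : sgraph) : nat := \sum_(x : G) deg x.
Definition isolated (G : sgraph) (v : G) : bool := [forall y, ~~ adj v y].

Lemma isolated_deg (G : sgraph) (v : G) : isolated v = (deg v == 0).
Proof. by rewrite /deg sum_nat_eq0; apply: eq_forallb => y; rewrite eqb0. Qed.

Lemma sum_card_vert (G : sgraph) (v : G) (F : G -> nat) :
  \sum_(x : card_vert v) F (val x) = \sum_(x | x != v) F x.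
Proof.
rewrite (reindex_omap (val : card_vert v -> G) insub) => [|x xv]; last first.
  by rewrite insubT.
by apply: eq_bigl => -[x xv] /=; rewrite insubT ?xv /= eqxx.
Qed.

(* Every edge of [G] not at [v] is an edge of the card [G - v]. *)
Lemma deg_sum_card (G : sgraph) (v : G) :
  deg_sum G = deg_sum (card_graph v) + 2 * deg v.
Proof.
have deg_card x : x != v -> deg x = adj x v + \sum_(y | y != v) adj x y.
  by move=> _; rewrite /deg (bigD1 v).
have in_deg : \sum_(x | x != v) adj x v = deg v.
  rewrite /deg [RHS](bigD1 v) //= adj_irr add0n.
  by apply: eq_bigr => x _; rewrite adj_sym.
have card_deg_sum :
    deg_sum (card_graph v) = \sum_(x | x != v) \sum_(y | y != v) adj x y.
  rewrite /deg_sum /deg /=.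
  rewrite -(sum_card_vert v (fun x => \sum_(y | y != v) adj x y)).
  apply: eq_bigr => x _.
  by rewrite -(sum_card_vert v (fun y => nat_of_bool (adj (val x) y))).
rewrite {1}/deg_sum (bigD1 v) //= (eq_bigr _ deg_card) big_split /= in_deg.
by rewrite -card_deg_sum; lia.
Qed.

Lemma deg_sum_iso (G H : sgraph) : iso G H -> deg_sum G = deg_sum H.
Proof.
case=> f [f_bij f_adj].
rewrite /deg_sum /deg (reindex f) /=; last exact: onW_bij.
apply: eq_bigr => x _; rewrite (reindex f) /=; last exact: onW_bij.
by apply: eq_bigr => y _; rewrite f_adj.
Qed.

(* Each edge is missing from exactly the two cards of its ends. *)
Lemma sum_deg_sum_cards (G : sgraph) :
  \sum_(v : G) deg_sum (card_graph v) + 2 * deg_sum G = #|G| * deg_sum G.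
Proof.
rewrite big_distrr -big_split /= -sum_nat_const.
by apply: eq_bigr => v _; rewrite -deg_sum_card.
Qed.

Lemma card_vertP (G : sgraph) (v x : G) :
  x = v \/ exists x' : card_vert v, val x' = x.
Proof.
case: (@insubP _ _ (card_vert v) x) => [x' _ <-|]; first by right; exists x'.
by rewrite negbK => /eqP; left.
Qed.

Definition card_extend (G H : sgraph) (v : G) (w : H)
  (f : card_vert v -> card_vert w) (x : G) : H :=
  if insub x is Some x' then val (f x') else w.

Section CardExtend.
Variables (G H : sgraph) (v : G) (w : H).
Implicit Type f : card_vert v -> card_vert w.

Lemma card_extend_val f x' : card_extend f (val x') = val (f x').
Proof. by rewrite /card_extend valK. Qed.

Lemma card_extend_center f : card_extend f v = w.
Proof. by rewrite /card_extend insubF // eqxx. Qed.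

End CardExtend.

Lemma iso_card_extend (G H : sgraph) (v : G) (w : H)
    (f : card_graph v -> card_graph w) :
  bijective f -> (forall x y, adj (f x) (f y) = adj x y) ->
  (forall x, adj w (val (f x)) = adj v (val x)) -> iso G H.
Proof.
case=> g fK gK f_adj f_nbhd; exists (card_extend f); split.
  exists (card_extend g) => [x|y].
    by case: (card_vertP v x) => [->|[x' <-]];
      rewrite ?card_extend_center ?card_extend_val ?fK ?card_extend_center.
  by case: (card_vertP w y) => [->|[y' <-]];
    rewrite ?card_extend_center ?card_extend_val ?gK ?card_extend_center.
move=> x y; case: (card_vertP v x) => [->|[x' <-]];
  case: (card_vertP v y) => [->|[y' <-]];
  rewrite ?card_extend_center ?card_extend_val ?adj_irr ?f_nbhd //.
  by rewrite adj_sym f_nbhd adj_sym.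
exact: f_adj.
Qed.

Section Deck.
Variables (G H : sgraph) (s : G -> H).
Hypotheses (s_bij : bijective s)
  (s_cards : forall v, iso (card_graph v) (card_graph (s v))).

(* By [sum_deg_sum_cards] the deck determines [(#|G| - 2) * deg_sum G]. *)
Lemma deck_deg_sum : 2 < #|G| -> deg_sum H = deg_sum G.
Proof.
move=> G_gt2; have HG := bij_eq_card s_bij.
have cards_sum : \sum_(v : G) deg_sum (card_graph v) =
                 \sum_(w : H) deg_sum (card_graph w).
  rewrite [RHS](reindex s) /=; last exact: onW_bij.
  by apply: eq_bigr => v _; apply: deg_sum_iso.
have := sum_deg_sum_cards G; have := sum_deg_sum_cards H.
rewrite -HG -cards_sum => sumH sumG.
have : (#|G| - 2) * deg_sum H = (#|G| - 2) * deg_sum G by nia.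
by move/eqP; rewrite eqn_pmul2l ?subn_gt0 // => /eqP.
Qed.

Lemma deck_deg v : 2 < #|G| -> deg (s v) = deg v.
Proof.
move=> G_gt2; have := deg_sum_card v; have := deg_sum_card (s v).
by rewrite (deck_deg_sum G_gt2) -(deg_sum_iso (s_cards v)); lia.
Qed.

Lemma deck_iso_isolated (v : G) : 2 < #|G| -> isolated v -> iso G H.
Proof.
move=> G_gt2 v_iso.
have sv_iso : isolated (s v) by rewrite isolated_deg deck_deg // -isolated_deg.
case: (s_cards v) => f [f_bij f_adj]; apply: (iso_card_extend f_bij f_adj) => x.
by rewrite (negbTE (forallP sv_iso _)) (negbTE (forallP v_iso _)).
Qed.

End Deck.

Lemma reconstructible_isolated (G : sgraph) (v : G) :
  2 < #|G| -> isolated v -> reconstructible G.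
Proof.
move=> G_gt2 v_iso H [s [s_bij s_cards]].
exact: (deck_iso_isolated s_bij s_cards G_gt2 v_iso).
Qed.

Lemma geq_bigmin_seq (I : eqType) (r : seq I) (P : pred I) (F : I -> nat) m x :
  x \in r -> P x -> \big[minn/m]_(i <- r | P i) F i <= F x.
Proof.
elim: r => // a r IHr; rewrite inE big_cons => /orP[/eqP <- -> | xr Px].
  exact: geq_minl.
by case: (P a); [apply: leq_trans (geq_minr _ _) _ |]; exact: IHr.
Qed.

Section Domination.
Variable G : sgraph.
Implicit Types (u x y z : G) (D : {set G}).

Lemma gamma_le D : dominating D -> gamma G <= #|D|.
Proof. by move=> D_dom; apply: geq_bigmin_seq; rewrite ?mem_index_enum. Qed.

Lemma dominating1E u : dominating [set u] = [forall z : G, (z == u) || adj u z].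
Proof.
apply: eq_forallb => z; rewrite inE; congr (_ || _).
apply/existsP/idP => [[u' /andP[/set1P -> //]] | uz].
by exists u; rewrite set11.
Qed.

Lemma dominating2E (a b : G) :
  dominating [set a; b] =
  [forall z : G, [|| z == a, z == b, adj a z | adj b z]].
Proof.
apply: eq_forallb => z; rewrite !inE -orbA; congr [|| _, _ | _].
apply/existsP/orP => [[u /andP[/set2P[]-> abz]] | [az | bz]]; auto.
  by exists a; rewrite set21.
by exists b; rewrite set22.
Qed.

Lemma gamma_ge2 :
  1 < #|G| -> (forall u : G, ~~ dominating [set u]) -> 1 < gamma G.
Proof.
move=> G_gt1 no_dom1; apply: (big_ind (fun m => 1 < m)) => // [m n|D D_dom].
  by rewrite leq_min => -> ->.
rewrite ltnNge leq_eqVlt ltnS leqn0 cards_eq0; apply/negP.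
case/orP => [/cards1P[u D_u] | /eqP D0].
  by rewrite D_u (negbTE (no_dom1 u)) in D_dom.
have /card_gt0P[z _] : 0 < #|G| by apply: ltnW.
by move/forallP/(_ z): D_dom; rewrite D0 inE; case/existsP => u; rewrite inE.
Qed.

Lemma gamma_eq2 (a b : G) : a != b -> dominating [set a; b] ->
  (forall u : G, ~~ dominating [set u]) -> gamma G = 2.
Proof.
move=> ab ab_dom no_dom1; apply/eqP; rewrite eqn_leq.
have := gamma_le ab_dom; rewrite cards2 ab => -> /=.
by apply: gamma_ge2 no_dom1; have := max_card [set a; b]; rewrite cards2 ab.
Qed.

Lemma dominating2_connected (a b : G) :
  adj a b -> dominating [set a; b] -> connected G.
Proof.
move=> ab; rewrite dominating2E => /forallP ab_dom.
have a_conn z : connect (@adj G) a z.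
  case/or4P: (ab_dom z) => [/eqP-> | /eqP-> | az | bz].
  - exact: connect0.
  - exact: connect1.
  - exact: connect1.
  - exact: connect_trans (connect1 ab) (connect1 bz).
move=> x y; rewrite (connect_trans _ (a_conn y)) //.
by rewrite (sym_connect_sym (@adj_sym G)).
Qed.

Lemma connected_not_isolated u : connected G -> 1 < #|G| -> ~~ isolated u.
Proof.
move=> G_conn G_gt1.
have /card_gt0P[z] : 0 < #|predC1 u| by rewrite cardC1; lia.
rewrite !inE => zu; case/connectP: (G_conn u z) => -[/= _ zE | z' p /=].
  by rewrite zE eqxx in zu.
case/andP => uz' _ _.
by rewrite negb_forall; apply/existsP; exists z'; rewrite negbK.
Qed.

End Domination.

Section Complement.
Variable G : sgraph.
Implicit Types (u : G) (D : {set G}).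

Lemma dominating1_compl u : @dominating (compl G) [set u] = isolated u.
Proof.
rewrite dominating1E; apply: eq_forallb => z /=; rewrite /compl_adj.
by case: eqVneq => [->|zu]; rewrite ?adj_irr // eq_sym zu.
Qed.

Lemma isolated_compl u : @isolated (compl G) u = dominating [set u].
Proof.
rewrite dominating1E; apply: eq_forallb => z /=; rewrite /compl_adj.
by rewrite negb_and !negbK eq_sym.
Qed.

Lemma dominating_compl_compl D : @dominating (compl (compl G)) D = dominating D.
Proof.
apply: eq_forallb => z; congr (_ || _); apply: eq_existsb => u.
by rewrite adj_compl_compl.
Qed.

End Complement.

Section Distance.
Variable G : sgraph.
Implicit Types x y z : G.

Lemma within_leq k k' x y : k <= k' -> within k x y -> within k' x y.
Proof.
by move=> kk' [p [x_p p_y p_k]]; exists p; split; rewrite ?(leq_trans p_k).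
Qed.

Lemma all_within_or_far k :
  (forall x y, within k x y) \/ exists x y, ~ within k x y.
Proof.
case: (classic (exists x y, ~ within k x y)) => [|near]; [by right | left].
by move=> x y; apply: NNPP => far; apply: near; exists x, y.
Qed.

Lemma within1_adj x y : within 1 x y -> x != y -> adj x y.
Proof.
case=> -[|z [|? ?]] [] //= => [_ -> | ]; first by rewrite eqxx.
by rewrite andbT => xz <-.
Qed.

Lemma diam_is2 x y : x != y -> ~~ adj x y ->
  (forall x y : G, within 2 x y) -> diam_is G 2.
Proof.
move=> xy nxy G_near; split=> // k k_lt2 G_near_k.
by rewrite (within1_adj (within_leq (k_lt2 : k <= 1) (G_near_k x y)) xy) in nxy.
Qed.

Lemma not_within2_compl x y : ~ within 2 x y ->
  [/\ x != y, @adj (compl G) x y & @dominating (compl G) [set x; y]].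
Proof.
move=> far.
have xy : x != y by apply/eqP => xy; apply: far; exists [::]; rewrite xy.
have nxy : ~~ adj x y.
  by apply/negP => xy_adj; apply: far; exists [:: y]; rewrite /= xy_adj.
have no_common z : ~~ adj x z || ~~ adj y z.
  rewrite -negb_and; apply/negP => /andP[xz yz]; apply: far.
  by exists [:: z; y]; rewrite /= xz adj_sym yz.
split=> //; first by rewrite /= /compl_adj xy.
rewrite dominating2E; apply/forallP => z /=; rewrite /compl_adj.
by case: (eqVneq x z) => //= _; case: (eqVneq y z) => //= _.
Qed.

End Distance.

Theorem theorem5 :
  (forall G : sgraph, 3 <= #|G| -> connected G -> reconstructible G) <->
  (forall G : sgraph, 3 <= #|G| -> connected G ->
     (gamma G = 2 \/ (diam_is G 2 /\ diam_is (compl G) 2)) ->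
     reconstructible G).
Proof.
split=> [recG G G_ge3 G_conn _ | recP G G_ge3 G_conn]; first exact: recG.
have G_gt1 : 1 < #|G| by apply: ltnW.
have G_nbr u : ~~ isolated u := connected_not_isolated u G_conn G_gt1.
have [/existsP[u u_dom] | /existsPn no_dom1] :=
  boolP [exists u : G, dominating [set u]].
  apply: reconstructible_compl.
  by apply: (@reconstructible_isolated (compl G) u); rewrite ?isolated_compl.
have [/existsP[a /existsP[b /andP[ab ab_dom]]] | /existsPn no_dom2] :=
  boolP [exists a : G, exists b : G, (a != b) && dominating [set a; b]].
  by apply: recP => //; left; apply: gamma_eq2 ab ab_dom no_dom1.
have [G_near | [x [y /not_within2_compl[xy xy_adj xy_dom]]]] :=
  all_within_or_far G 2; last first.
  apply: reconstructible_compl; apply: recP => //.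
    exact: dominating2_connected xy_adj xy_dom.
  left; apply: (@gamma_eq2 (compl G) x y xy xy_dom) => u.
  by rewrite dominating1_compl.
have [Gc_near | [x [y /not_within2_compl[xy _]]]] :=
  all_within_or_far (compl G) 2; last first.
  rewrite dominating_compl_compl => xy_dom.
  by move/existsPn: (no_dom2 x) => /(_ y); rewrite xy xy_dom.
have /card_gt0P[u _] : 0 < #|G| by apply: ltnW.
apply: recP => //; right; split.
- move: (no_dom1 u); rewrite dominating1E negb_forall => /existsP[z].
  by rewrite negb_or eq_sym => /andP[uz nuz]; apply: diam_is2 uz nuz G_near.
- move: (G_nbr u); rewrite negb_forall => /existsP[z]; rewrite negbK => uz.
  have Gc_nuz : ~~ @adj (compl G) u z by rewrite /= /compl_adj uz andbF.
  apply: diam_is2 _ Gc_nuz Gc_near.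
  by apply: contraTneq uz => ->; rewrite adj_irr.
Qed.
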